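(* Let $k\ge1$ and $n:=2^k$. For each $x\in\langle C_k\rangle$, $C(x)$ is an isometric cycle of length $2n$ in $Q_n$ with flip sequence $(1,2,\dots,n,1,2,\dots,n)$, and the vertex sets of the cycles $C(x)$, $x\in\langle C_k\rangle$, form a partition of the vertex set of $Q_n$.
   Context: $Q_n$ is the $n$-dimensional hypercube: vertices are all subsets of $[n]=\{1,\dots,n\}$, with $x,y$ adjacent iff $|x\oplus y|=1$, where $\oplus$ is symmetric difference; an edge $\{x,x\oplus\{i\}\}$ has direction $i$. The flip sequence of a path/cycle is the sequence of directions of its consecutive edges. A subgraph is isometric if it preserves graph distances of $Q_n$. $\langle X\rangle$ denotes the set of all symmetric differences of finitely many members of the family $X$. Define $O_1:=C_1:=\emptyset$ and for $k\ge2$: $O_k:=\{\{2i-1,2i+1\}:1\le i\le 2^{k-1}-1\}$ and $C_k:=O_k\cup 2\cdot C_{k-1}$, where $2\cdot X$ doubles every element of every set in $X$. (All sets of $\langle C_k\rangle$ are subsets of $[n-1]$.) For $x\in\langle C_k\rangle$, $C(x)$ is the cycle with vertices $v_0,v_1,\dots,v_{2n-1}$ (cyclically), where $v_j:=x\oplus\{1,\dots,j\}$ for $0\le j\le n$ and $v_{n+j}:=x\oplus[n]\oplus\{1,\dots,j\}$ for $0\le j\le n-1$. *)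

From mathcomp Require Import all_boot.
Set Implicit Arguments. Unset Strict Implicit. Unset Printing Implicit Defensive.

(* Encoding: the ground set [n] = {1,...,n} is represented by 'I_n, the
   ordinal i : 'I_n standing for the element i+1.  Vertices of Q_n are
   subsets of [n], i.e. elements of {set 'I_n}. *)

Definition symdiff (T : finType) (A B : {set T}) : {set T} := (A :\: B) :|: (B :\: A).

Definition Qadj (n : nat) : rel {set 'I_n} := fun x y => #|symdiff x y| == 1.

Definition gdist (T : eqType) (e : rel T) (a b : T) (d : nat) : Prop :=
  (exists p : seq T, [/\ path e a p, last a p = b & size p = d]) /\
  (forall p : seq T, path e a p -> last a p = b -> d <= size p).

Definition pre (n j : nat) : {set 'I_n} := [set i : 'I_n | i < j].

Definition Cv (n : nat) (x : {set 'I_n}) (j : nat) : {set 'I_n} :=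
  if j <= n then symdiff x (pre n j)
  else symdiff (symdiff x [set: 'I_n]) (pre n (j - n)).

Definition cyc_verts (T : Type) (v : nat -> T) (L : nat) : seq T :=
  [seq v j | j <- iota 0 L].

Definition cyc_rel (T : eqType) (v : nat -> T) (L : nat) : rel T :=
  fun a b => has (fun j => ((a == v j) && (b == v (j.+1 %% L)))
                        || ((b == v j) && (a == v (j.+1 %% L)))) (iota 0 L).

(* v_0 ... v_(L-1) is a cycle of length L in Q_n with flip sequence s
   (L = size s; directions are 1-based elements of [n]) *)
Definition has_flip_seq (n : nat) (v : nat -> {set 'I_n}) (s : seq nat) : Prop :=
  forall j, j < size s ->
    v (j.+1 %% size s) = symdiff (v j) [set i : 'I_n | i.+1 == nth 0 s j].

Definition is_cycle_of_length (n : nat) (v : nat -> {set 'I_n}) (L : nat) : Prop :=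
  2 < L /\ uniq (cyc_verts v L) /\
  (forall j, j < L -> Qadj (v j) (v (j.+1 %% L))).

Definition isometric_cycle (n : nat) (v : nat -> {set 'I_n}) (L : nat) : Prop :=
  forall a b, a \in cyc_verts v L -> b \in cyc_verts v L ->
    forall d, gdist (@Qadj n) a b d <-> gdist (cyc_rel v L) a b d.

(* O_k and C_k, as lists of subsets of nat (1-based) *)
Definition Onat (k : nat) : seq (seq nat) :=
  if k < 2 then [::]
  else [seq [:: (2 * i).-1; (2 * i).+1] | i <- iota 1 (2 ^ k.-1 - 1)].

Fixpoint Cnat (k : nat) : seq (seq nat) :=
  match k with
  | 0 => [::]
  | 1 => [::]
  | k'.+1 => Onat k ++ [seq [seq 2 * a | a <- s] | s <- Cnat k']
  end.

Definition toSet (n : nat) (s : seq nat) : {set 'I_n} := [set i : 'I_n | i.+1 \in s].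

Definition Cset (k n : nat) : seq {set 'I_n} := [seq toSet n s | s <- Cnat k].

Inductive in_span (T : finType) (X : seq {set T}) : {set T} -> Prop :=
| span_nil : in_span X set0
| span_cons g x : g \in X -> in_span X x -> in_span X (symdiff g x).

From mathcomp Require Import all_boot zify.
Set Implicit Arguments. Unset Strict Implicit. Unset Printing Implicit Defensive.

(* Write v_j = x (+) P_j, where P_j = {1..j} for j <= n and P_j = [n] \ {1..j-n}
   for n < j < 2n.  |P_i (+) P_j| = min(|i-j|, 2n-|i-j|) is both the Hamming
   distance in Q_n and the distance along C(x), so C(x) is an isometric cycle.
   For the partition, attach to a set v the k+1 parities (its syndrome): the
   parity of v on the odd elements of [n], followed recursively by the syndrome
   of v on the even elements, read as a subset of [n/2].  The syndrome is
   additive and vanishes exactly on <C_k>: each pair {2i-1,2i+1} meets the odd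
   elements twice, and conversely such pairs together with the doubled
   generators of C_(k-1) build every set with zero syndrome.  The 2n = 2^(k+1)
   sets P_j have pairwise distinct syndromes, hence realise all of them, so every
   v is uniquely x (+) P_j with x in <C_k>. *)

Lemma in_symdiff (T : finType) (A B : {set T}) t :
  (t \in symdiff A B) = (t \in A) (+) (t \in B).
Proof. by rewrite /symdiff !inE; case: (t \in A); case: (t \in B). Qed.

Lemma symdiffC (T : finType) (A B : {set T}) : symdiff A B = symdiff B A.
Proof. by apply/setP => t; rewrite !in_symdiff addbC. Qed.

Lemma symdiffK (T : finType) (A B : {set T}) : symdiff A (symdiff A B) = B.
Proof. by apply/setP => t; rewrite !in_symdiff addKb. Qed.

Lemma symdiffv (T : finType) (A : {set T}) : symdiff A A = set0.
Proof. by apply/setP => t; rewrite in_symdiff addbb inE. Qed.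

Lemma card_symdiff_triangle (T : finType) (A B C : {set T}) :
  #|symdiff A C| <= #|symdiff A B| + #|symdiff B C|.
Proof.
apply: leq_trans (subset_leq_card _) (leq_card_setU _ _).1.
apply/subsetP => t; rewrite in_setU !in_symdiff.
by case: (t \in A); case: (t \in B); case: (t \in C).
Qed.

Lemma card_ord_count n (P : pred nat) : #|[set t : 'I_n | P t]| = count P (iota 0 n).
Proof.
rewrite -val_enum_ord count_map cardsE cardE /enum_mem size_filter.
by rewrite count_filter; apply: eq_count => t /=; rewrite !inE ?andbT.
Qed.

Lemma count_ltn_iota a N : count (fun m => m < a) (iota 0 N) = minn a N.
Proof.
elim: N => [|N IH]; first by rewrite minn0.
by rewrite -addn1 iotaD count_cat IH /= add0n addn0; case: (ltnP N a) => /=; lia.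
Qed.

Lemma count_ltn_addb_iota a b N :
  count (fun t => (t < a) (+) (t < b)) (iota 0 N) =
  maxn (minn a N) (minn b N) - minn (minn a N) (minn b N).
Proof.
elim: N => [|N IH]; first by rewrite !minn0.
rewrite -addn1 iotaD count_cat IH /= add0n addn0.
by case: (ltnP N a); case: (ltnP N b) => /=; lia.
Qed.

Lemma count_negb (T : Type) (P : pred T) s : count (fun t => ~~ P t) s = size s - count P s.
Proof. by rewrite -(count_predC P s) addKn. Qed.

Lemma count_eq_andb (T : eqType) (s : seq T) a (P : pred T) : uniq s ->
  count (fun i => (i == a) && P i) s = (a \in s) && P a.
Proof.
elim: s => [|x s IH] //= /andP [xs us]; rewrite IH // in_cons.
by case: eqVneq => [<-|] //=; rewrite (negbTE xs) addn0.
Qed.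

Lemma odd_count_addb (T : Type) (P Q : pred T) s :
  odd (count (fun t => P t (+) Q t) s) = odd (count P s) (+) odd (count Q s).
Proof.
elim: s => [|x s IH] //=; rewrite !oddD IH !oddb.
by case: (P x); case: (Q x); case: (odd (count P s)); case: (odd (count Q s)).
Qed.

Lemma count_orb_disjoint (T : Type) (P Q : pred T) s : (forall t, ~~ (P t && Q t)) ->
  count (fun t => P t || Q t) s = count P s + count Q s.
Proof.
move=> PQ; rewrite -count_predUI (@eq_count _ (predI P Q) pred0) ?count_pred0 ?addn0 //.
by move=> t /=; apply/negbTE.
Qed.

Lemma count_pred2_iota a b N : a != b -> a < N -> b < N ->
  count (fun m => (m == a) || (m == b)) (iota 0 N) = 2.
Proof.
move=> ab aN bN; rewrite count_orb_disjoint => [|m]; last first.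
  by apply/negP => /andP [/eqP-> /eqP e]; rewrite e eqxx in ab.
by rewrite !count_uniq_mem ?iota_uniq // !mem_iota aN bN.
Qed.

(** * Distances in the hypercube and along a cycle *)

Lemma QadjC n (a b : {set 'I_n}) : Qadj a b = Qadj b a.
Proof. by rewrite /Qadj symdiffC. Qed.

Lemma path_Qadj_card_symdiff n (a : {set 'I_n}) p :
  path (@Qadj n) a p -> #|symdiff a (last a p)| <= size p.
Proof.
elim: p a => [|c p IH] a /=; first by rewrite symdiffv cards0.
case/andP => /eqP ac /IH cp.
by apply: leq_trans (card_symdiff_triangle a c _) _; rewrite ac add1n ltnS.
Qed.

Lemma exists_Qadj_path n (a b : {set 'I_n}) :
  exists p, [/\ path (@Qadj n) a p, last a p = b & size p = #|symdiff a b|].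
Proof.
move: {2}#|_| (erefl #|symdiff a b|) => m; elim: m a => [|m IH] a ab.
  exists [::]; split => //=; apply/setP => t.
  by move: (in_symdiff a b t); rewrite (cards0_eq ab) inE; do 2!case: (_ \in _).
have /card_gt0P [t abt] : 0 < #|symdiff a b| by rewrite ab.
pose a' := symdiff a [set t].
have a'b : #|symdiff a' b| = m.
  move: (cardsD1 t (symdiff a b)); rewrite abt ab add1n => [[->]].
  apply: eq_card => u; rewrite in_setD1 !in_symdiff inE; move: abt; rewrite in_symdiff.
  case: (eqVneq u t) => [->|_] /=; last by rewrite addbF.
  by case: (t \in a); case: (t \in b).
have [p [ap pb sp]] := IH a' a'b.
exists (a' :: p); split => //=; last by rewrite sp a'b ab.
by rewrite ap andbT /Qadj symdiffK cards1.
Qed.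

Lemma gdistE (T : eqType) (e : rel T) a b D :
  (exists p, [/\ path e a p, last a p = b & size p = D]) ->
  (forall p, path e a p -> last a p = b -> D <= size p) ->
  forall d, gdist e a b d <-> d = D.
Proof.
move=> [q [eq qb sq]] lowD d; split.
  case=> [[p [ep pb <-]] mind].
  by apply/eqP; rewrite eqn_leq lowD // -sq mind.
by move=> ->; split; [exists q | exact: lowD].
Qed.

Lemma gdist_QadjE n (a b : {set 'I_n}) d : gdist (@Qadj n) a b d <-> d = #|symdiff a b|.
Proof.
apply: gdistE => [|p ap <-]; [exact: exists_Qadj_path | exact: path_Qadj_card_symdiff].
Qed.

Fixpoint walk (T : Type) (V : nat -> T) (i s : nat) : seq T :=
  if s is s'.+1 then V i.+1 :: walk V i.+1 s' else [::].

Lemma walkP (T : Type) (e : rel T) V i s : (forall m, e (V m) (V m.+1)) ->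
  [/\ path e (V i) (walk V i s), last (V i) (walk V i s) = V (i + s)
    & size (walk V i s) = s].
Proof.
move=> eV; elim: s i => [|s IH] i /=; first by rewrite addn0.
by have [-> -> ->] := IH i.+1; rewrite eV addnS.
Qed.

Lemma rev_path_exists (T : eqType) (e : rel T) : symmetric e ->
  forall a b p, path e b p -> last b p = a ->
  exists q, [/\ path e a q, last a q = b & size q = size p].
Proof.
move=> sym_e a b p ep pa; exists (rev (belast b p)); split.
- by rewrite -pa rev_path; apply: sub_path ep => u v; rewrite sym_e.
- by case: p {ep} pa => [|c p] /= => [->|_]; rewrite ?rev_cons ?last_rcons.
- by rewrite size_rev size_belast.
Qed.

Lemma cyc_relC (T : eqType) (v : nat -> T) L : symmetric (cyc_rel v L).
Proof. by move=> a b; rewrite /cyc_rel; apply: eq_has => j; rewrite orbC. Qed.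

(** * The cycles C(x) *)

Definition pattern (n j t : nat) : bool := if j <= n then t < j else ~~ (t < j - n).

Lemma in_Cv n (x : {set 'I_n}) j (t : 'I_n) : (t \in Cv x j) = (t \in x) (+) pattern n j t.
Proof.
rewrite /Cv /pattern; case: ifP => _; rewrite !in_symdiff !inE //.
by rewrite addbT addNb addbN.
Qed.

Lemma nth_iota_cat2 n j : j < n + n ->
  nth 0 (iota 1 n ++ iota 1 n) j = if j < n then j.+1 else (j - n).+1.
Proof.
by move=> jlt; rewrite nth_cat size_iota; case: ltnP => ?; rewrite nth_iota ?add1n //; lia.
Qed.

Lemma pattern_step n j t : t < n -> j < n + n ->
  pattern n (j.+1 %% (n + n)) t =
  pattern n j t (+) (t.+1 == if j < n then j.+1 else (j - n).+1).
Proof.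
move=> tn jlt; have [jn1|] := ltnP j.+1 (n + n).
  rewrite modn_small // /pattern.
  by repeat case: leqP => ?; repeat case: eqVneq => ?; rewrite //=; lia.
rewrite leq_eqVlt ltnNge jlt orbF => /eqP wrap; rewrite wrap modnn /pattern.
by repeat case: leqP => ?; repeat case: eqVneq => ?; rewrite //=; lia.
Qed.

Lemma card_ord_succ_eq n c : 0 < c <= n -> #|[set i : 'I_n | i.+1 == c]| = 1.
Proof.
move=> cn; rewrite (card_ord_count n (fun i => i.+1 == c)).
rewrite (@eq_count _ _ (pred1 c.-1)) => [|i /=]; last by apply/eqP/eqP; lia.
by rewrite count_uniq_mem ?iota_uniq // mem_iota; lia.
Qed.

Lemma count_pattern_addb n i j : i <= j -> j < n + n ->
  count (fun t => pattern n i t (+) pattern n j t) (iota 0 n) =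
  minn (j - i) (n + n - (j - i)).
Proof.
move=> ij jlt; rewrite /pattern.
case: (leqP i n) => ni; case: (leqP j n) => nj; try lia.
- by rewrite count_ltn_addb_iota; lia.
- under eq_count do rewrite addbN.
  by rewrite count_negb size_iota count_ltn_addb_iota; lia.
- under eq_count do rewrite addbN addNb negbK.
  by rewrite count_ltn_addb_iota; lia.
Qed.

Section CycleOfSet.

Variables (n : nat) (x : {set 'I_n}).

Lemma has_flip_seq_Cv : has_flip_seq (Cv x) (iota 1 n ++ iota 1 n).
Proof.
move=> j; rewrite size_cat size_iota => jlt.
apply/setP => t; rewrite in_symdiff !in_Cv inE nth_iota_cat2 // -addbA.
by rewrite pattern_step.
Qed.

Lemma Qadj_Cv_succ j : j < n + n -> Qadj (Cv x j) (Cv x (j.+1 %% (n + n))).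
Proof.
move=> jlt; move: (has_flip_seq_Cv); rewrite /has_flip_seq size_cat size_iota => -> //.
by rewrite /Qadj symdiffK card_ord_succ_eq // nth_iota_cat2 //; case: (ltnP j n); lia.
Qed.

Lemma card_symdiff_Cv i j : i <= j -> j < n + n ->
  #|symdiff (Cv x i) (Cv x j)| = minn (j - i) (n + n - (j - i)).
Proof.
move=> ij jlt; rewrite -count_pattern_addb // -card_ord_count.
by apply: eq_card => t; rewrite in_symdiff !in_Cv inE addbACA addbb.
Qed.

Lemma Cv_inj i j : i < n + n -> j < n + n -> Cv x i = Cv x j -> i = j.
Proof.
wlog ij : i j / i <= j => [hwlog ilt jlt e|_ jlt e].
  by case: (leqP i j) => [|/ltnW] ij; [|apply/esym]; apply: hwlog.
by move: (card_symdiff_Cv ij jlt); rewrite e symdiffv cards0; lia.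
Qed.

Lemma cyc_rel_Cv_succ m : 0 < n ->
  cyc_rel (Cv x) (n + n) (Cv x (m %% (n + n))) (Cv x (m.+1 %% (n + n))).
Proof.
move=> n0; apply/hasP; exists (m %% (n + n)); first by rewrite mem_iota ltn_pmod //; lia.
by rewrite -[(m %% _).+1]addn1 modnDml addn1 !eqxx.
Qed.

Lemma cyc_rel_Cv_Qadj a b : cyc_rel (Cv x) (n + n) a b -> Qadj a b.
Proof.
case/hasP => j; rewrite mem_iota add0n => jlt.
by case/orP => /andP [/eqP -> /eqP ->]; [|rewrite QadjC]; apply: Qadj_Cv_succ.
Qed.

Lemma exists_cyc_path_Cv_le i j : 0 < n -> i <= j -> j < n + n ->
  exists p, [/\ path (cyc_rel (Cv x) (n + n)) (Cv x i) p, last (Cv x i) p = Cv x j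
    & size p = #|symdiff (Cv x i) (Cv x j)|].
Proof.
move=> n0 ij jlt; rewrite card_symdiff_Cv //.
pose V m := Cv x (m %% (n + n)).
have eV m : cyc_rel (Cv x) (n + n) (V m) (V m.+1) by exact: cyc_rel_Cv_succ.
case: (leqP (j - i) (n + n - (j - i))) => short.
  have [] := walkP i (j - i) eV; rewrite /V subnKC // !modn_small; try lia.
  by exists (walk V i (j - i)); split => //; lia.
have [] := walkP j (n + n - (j - i)) eV; rewrite /V.
have -> : j + (n + n - (j - i)) = i + (n + n) by lia.
rewrite modnDr !modn_small; try lia.
move=> ep pi sp; have [q [eq qj sq]] := rev_path_exists (@cyc_relC _ _ _) ep pi.
by exists q; split => //; rewrite sq sp; lia.
Qed.

Lemma gdist_cyc_CvE i j d : 0 < n -> i < n + n -> j < n + n ->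
  gdist (cyc_rel (Cv x) (n + n)) (Cv x i) (Cv x j) d <-> d = #|symdiff (Cv x i) (Cv x j)|.
Proof.
move=> n0 ilt jlt; apply: gdistE => [|p ep <-]; last first.
  by apply: path_Qadj_card_symdiff; apply: sub_path ep => ? ?; apply: cyc_rel_Cv_Qadj.
case: (leqP i j) => [ij|/ltnW ji]; first exact: exists_cyc_path_Cv_le.
have [p [ep pi sp]] := exists_cyc_path_Cv_le n0 ji ilt.
have [q [eq qj sq]] := rev_path_exists (@cyc_relC _ _ _) ep pi.
by exists q; rewrite sq sp symdiffC.
Qed.

Lemma is_cycle_of_length_Cv : 1 < n -> is_cycle_of_length (Cv x) (n + n).
Proof.
move=> n1; split; first lia; split; last by move=> j; apply: Qadj_Cv_succ.
rewrite /cyc_verts map_inj_in_uniq ?iota_uniq // => i j.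
by rewrite !mem_iota => /andP [_ ?] /andP [_ ?]; apply: Cv_inj.
Qed.

Lemma isometric_cycle_Cv : 0 < n -> isometric_cycle (Cv x) (n + n).
Proof.
move=> n0 _ _ /mapP [i + ->] /mapP [j + ->] d; rewrite !mem_iota => ilt jlt.
by rewrite gdist_QadjE gdist_cyc_CvE.
Qed.

End CycleOfSet.

(** * The syndrome and the span of C_k *)

(* Positions are 0-based, so [f (2 * m)] is the value at the odd element 2m+1 of [n]. *)
Fixpoint syndrome (k : nat) (f : nat -> bool) (b : nat) : bool :=
  match k, b with
  | 0, _ => (b == 0) && f 0
  | k'.+1, 0 => odd (count (fun m => f (2 * m)) (iota 0 (2 ^ k')))
  | k'.+1, b'.+1 => syndrome k' (fun m => f (2 * m).+1) b'
  end.

Lemma eq_syndrome k f g b : (forall t, t < 2 ^ k -> f t = g t) ->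
  syndrome k f b = syndrome k g b.
Proof.
elim: k f g b => [|k IH] f g [|b] fg /=; rewrite ?fg //.
  by congr odd; apply: eq_in_count => m; rewrite mem_iota => /andP [_ ?]; apply: fg;
    rewrite expnS; lia.
by apply: IH => m ?; apply: fg; rewrite expnS; lia.
Qed.

Lemma syndrome_addb k f g b :
  syndrome k (fun t => f t (+) g t) b = syndrome k f b (+) syndrome k g b.
Proof.
by elim: k f g b => [|k IH] f g [|b] //=; apply: odd_count_addb.
Qed.

Lemma syndrome_false k b : syndrome k (fun _ => false) b = false.
Proof. by elim: k b => [|k IH] [|b] //=; rewrite count_pred0. Qed.

Lemma CnatS k : Cnat k.+1 = Onat k.+1 ++ [seq [seq 2 * a | a <- s] | s <- Cnat k].
Proof. by case: k. Qed.

Lemma mem_double_map (s : seq nat) m : (2 * m).+2 \in [seq 2 * a | a <- s] = (m.+1 \in s).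
Proof.
have -> : (2 * m).+2 = 2 * m.+1 by lia.
by rewrite mem_map // => u v; lia.
Qed.

Lemma syndrome_Cnat k s b : s \in Cnat k -> syndrome k (fun t => t.+1 \in s) b = false.
Proof.
elim: k s b => [|k IH] s b //; rewrite CnatS mem_cat => /orP [].
  rewrite /Onat; case: ifP => // _ /mapP [i]; rewrite mem_iota /= => /andP [i1 i2] ->.
  case: b => [|b] /=.
    rewrite (@eq_in_count _ _ (fun m => (m == i.-1) || (m == i))) => [|m _]; last first.
      by rewrite !inE; apply/idP/idP => /orP [] /eqP ?; lia.
    by rewrite count_pred2_iota //; lia.
  rewrite (@eq_syndrome _ _ (fun _ => false)) ?syndrome_false // => m _.
  by rewrite !inE; apply/negbTE/negP => /orP [] /eqP; lia.
case/mapP => s' s's ->; case: b => [|b] /=.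
  rewrite (@eq_in_count _ _ pred0) ?count_pred0 // => m _ /=.
  by apply/negbTE/negP => /mapP [y _]; lia.
by rewrite -(IH s' b s's); apply: eq_syndrome => m _; rewrite mem_double_map.
Qed.

Definition set_char n (x : {set 'I_n}) (t : nat) : bool :=
  if insub t is Some i then i \in x else false.

Lemma set_char_ord n (x : {set 'I_n}) (i : 'I_n) : set_char x i = (i \in x).
Proof. by rewrite /set_char valK. Qed.

Lemma set_char_lt n (x : {set 'I_n}) t (tn : t < n) : set_char x t = (Ordinal tn \in x).
Proof. exact: (set_char_ord x (Ordinal tn)). Qed.

Lemma syndrome_span k (x : {set 'I_(2 ^ k)}) : in_span (Cset k (2 ^ k)) x ->
  forall b, syndrome k (set_char x) b = false.
Proof.
elim=> [|g y /mapP [s sC ->] _ IH] b.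
  by rewrite -(syndrome_false k b); apply: eq_syndrome => t tn; rewrite set_char_lt inE.
rewrite (@eq_syndrome _ _ (fun t => (t.+1 \in s) (+) set_char y t)); last first.
  by move=> t tn; rewrite !set_char_lt in_symdiff inE.
by rewrite syndrome_addb IH syndrome_Cnat.
Qed.

(* The pair {2i-1, 2i+1} is used iff h has odd parity below i; the element 2m+1
   lies in the pairs for i = m and i = m+1, so it is covered an odd number of
   times iff h m. *)
Definition pair_gens N (h : nat -> bool) : seq (seq nat) :=
  [seq [:: (2 * i).-1; (2 * i).+1] | i <- [seq i <- iota 1 (N - 1) | odd (count h (iota 0 i))]].

Lemma odd_count_pair_gens N h m : ~~ odd (count h (iota 0 N)) -> m < N ->
  odd (count (fun s => (2 * m).+1 \in s) (pair_gens N h)) = h m.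
Proof.
move=> hN mN; rewrite /pair_gens count_map count_filter.
set c := fun i => odd (count h (iota 0 i)).
have cS : c m.+1 = c m (+) h m by rewrite /c -addn1 iotaD count_cat oddD /= addn0 oddb.
rewrite (@eq_in_count _ _ (fun i => ((i == m.+1) && c i) || ((i == m) && c i))); last first.
  move=> i; rewrite mem_iota /= !inE => /andP [i1 _].
  have -> : ((2 * m).+1 == (2 * i).-1) = (i == m.+1) by apply/eqP/eqP; lia.
  have -> : ((2 * m).+1 == (2 * i).+1) = (i == m) by apply/eqP/eqP; lia.
  by rewrite andb_orl.
rewrite count_orb_disjoint => [|i]; last first.
  by apply/negP => /andP [/andP [/eqP -> _] /andP [/eqP]]; lia.
rewrite !count_eq_andb ?iota_uniq // !mem_iota oddD !oddb cS.
rewrite add1n subn1 prednK; last by lia.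
have [mN1|NmN] := ltnP m.+1 N.
  case: (posnP m) => [->|m0] /=; first by rewrite /c /= addbF.
  by rewrite mN addbAC addbb.
have eN : N = m.+1 by lia.
move: hN; rewrite -/(c N) eN cS andbF /= ltnSn andbT.
by case: (posnP m) => [->|_] /=; [rewrite /c /=; case: (h 0) | case: (c m); case: (h m)].
Qed.

Lemma pair_gens_Cnat k h : {subset pair_gens (2 ^ k) h <= Cnat k.+1}.
Proof.
move=> s /mapP [i]; rewrite mem_filter mem_iota => /andP [_ /andP [i1 i2]] ->.
rewrite CnatS mem_cat /Onat; case: k i2 => [|k] i2; first by lia.
by apply/orP; left; apply/mapP; exists i; rewrite //= mem_iota; lia.
Qed.

Lemma syndrome_eq0_Cnat_decomposition k f : (forall b, b <= k -> syndrome k f b = false) ->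
  exists l, {subset l <= Cnat k} /\
    forall t, t < 2 ^ k -> f t = odd (count (fun s => t.+1 \in s) l).
Proof.
elim: k f => [|k IH] f f0.
  by exists [::]; split => // t; rewrite ltnS leqn0 => /eqP ->; move: (f0 0 (leqnn 0)) => /=.
have even_f : ~~ odd (count (fun m => f (2 * m)) (iota 0 (2 ^ k))).
  by rewrite -[odd _]/(syndrome k.+1 f 0) f0.
have [l [lC fl]] := IH (fun m => f (2 * m).+1) (fun b hb => f0 b.+1 hb).
exists (pair_gens (2 ^ k) (fun m => f (2 * m)) ++ [seq [seq 2 * a | a <- s] | s <- l]).
split.
  move=> s; rewrite mem_cat => /orP [/pair_gens_Cnat // | /mapP [s' /lC s'C ->]].
  by rewrite CnatS mem_cat map_f ?orbT.
move=> t; have [m [-> | ->]] : exists m, t = 2 * m \/ t = (2 * m).+1 by exists t./2; lia.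
  rewrite expnS => tk; rewrite count_cat oddD odd_count_pair_gens //; last by lia.
  rewrite count_map (@eq_count _ _ pred0) ?count_pred0 ?addbF // => s /=.
  by apply/negbTE/negP => /mapP [y _]; lia.
rewrite expnS => tk; rewrite count_cat oddD /pair_gens count_map count_filter.
rewrite (@eq_count _ _ pred0) ?count_pred0 => [|i] /=; last first.
  by apply/negbTE/negP => /andP [+ _]; rewrite !inE => /orP [] /eqP; lia.
rewrite count_map fl; last by lia.
by congr odd; apply: eq_count => s /=; rewrite mem_double_map.
Qed.

Lemma in_foldr_symdiff n (l : seq (seq nat)) (t : 'I_n) :
  (t \in foldr (@symdiff _) set0 [seq toSet n s | s <- l]) = odd (count (fun s => t.+1 \in s) l).
Proof.
elim: l => [|s l IH] /=; first by rewrite inE.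
by rewrite in_symdiff IH inE oddD oddb.
Qed.

Lemma in_span_foldr k (l : seq (seq nat)) : {subset l <= Cnat k} ->
  in_span (Cset k (2 ^ k)) (foldr (@symdiff _) set0 [seq toSet (2 ^ k) s | s <- l]).
Proof.
elim: l => [|s l IH] lC /=; first exact: span_nil.
apply: span_cons; first by apply: map_f; apply: lC; rewrite inE eqxx.
by apply: IH => s' s'l; apply: lC; rewrite inE s'l orbT.
Qed.

Lemma syndrome_eq0_span k (x : {set 'I_(2 ^ k)}) :
  (forall b, b <= k -> syndrome k (set_char x) b = false) -> in_span (Cset k (2 ^ k)) x.
Proof.
move=> x0; have [l [lC xl]] := syndrome_eq0_Cnat_decomposition x0.
suff -> : x = foldr (@symdiff _) set0 [seq toSet (2 ^ k) s | s <- l] by apply: in_span_foldr.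
by apply/setP => t; rewrite in_foldr_symdiff -xl // set_char_ord.
Qed.

(** * Syndromes of the cycle vertices *)

Lemma syndrome_pattern0 k j : j < 2 * 2 ^ k.+1 ->
  syndrome k.+1 (pattern (2 ^ k.+1) j) 0 = odd (j.+1 %/ 2).
Proof.
rewrite /= /pattern expnS => jlt; case: (leqP j (2 * 2 ^ k)) => jk.
  rewrite (@eq_count _ _ (fun m => m < j.+1 %/ 2)) => [|m]; last by apply/idP/idP; lia.
  by rewrite count_ltn_iota; congr odd; lia.
rewrite (@eq_count _ _ (fun m => ~~ (m < (j - 2 * 2 ^ k).+1 %/ 2))) => [|m]; last first.
  by congr negb; apply/idP/idP; lia.
rewrite count_negb size_iota count_ltn_iota.
have -> : j.+1 %/ 2 = 2 ^ k + (j - 2 * 2 ^ k).+1 %/ 2 by lia.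
by rewrite (minn_idPl _) ?oddB ?oddD //; lia.
Qed.

Lemma syndrome_patternS k j b : j < 2 * 2 ^ k.+1 ->
  syndrome k.+1 (pattern (2 ^ k.+1) j) b.+1 = syndrome k (pattern (2 ^ k) j./2) b.
Proof.
rewrite /= expnS => jlt; apply: eq_syndrome => m mk; rewrite /pattern.
by case: (leqP j (2 * 2 ^ k)); case: (leqP j./2 (2 ^ k)) => *; apply/idP/idP; lia.
Qed.

Lemma syndrome_pattern_inj k i j : i < 2 * 2 ^ k -> j < 2 * 2 ^ k ->
  (forall b, b <= k -> syndrome k (pattern (2 ^ k) i) b = syndrome k (pattern (2 ^ k) j) b) ->
  i = j.
Proof.
elim: k i j => [|k IH] i j ilt jlt eij.
  by move: {eij} (eij 0 isT) ilt jlt; case: i => [|[|i]]; case: j => [|[|j]].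
have halves : i./2 = j./2.
  by apply: IH => [||b bk]; rewrite -?syndrome_patternS ?eij //; rewrite expnS in ilt jlt; lia.
move: (eij 0 isT); rewrite !syndrome_pattern0 //.
have -> : i.+1 %/ 2 = i./2 + odd i by lia.
have -> : j.+1 %/ 2 = j./2 + odd j by lia.
by rewrite halves !oddD !oddb => /addbI oij; lia.
Qed.

Lemma syndrome_pattern_onto k (w : nat -> bool) : exists2 j, j < 2 * 2 ^ k &
  forall b, b <= k -> syndrome k w b = syndrome k (pattern (2 ^ k) j) b.
Proof.
pose F (j : 'I_(2 * 2 ^ k)) := [ffun b : 'I_k.+1 => syndrome k (pattern (2 ^ k) j) b].
have F_inj : injective F.
  move=> i j /ffunP Fij; apply/val_inj/(@syndrome_pattern_inj k) => [||b bk]; rewrite ?ltn_ord //.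
  by move: (Fij (Ordinal (bk : b < k.+1))); rewrite !ffunE.
have /codomP [j Fj] : [ffun b : 'I_k.+1 => syndrome k w b] \in codom F.
  by apply: inj_card_onto; rewrite // card_ffun card_bool !card_ord expnS.
exists j => // b bk; move/ffunP: Fj => /(_ (Ordinal (bk : b < k.+1))).
by rewrite !ffunE.
Qed.

Lemma syndrome_Cv k (x : {set 'I_(2 ^ k)}) j b :
  syndrome k (set_char (Cv x j)) b =
  syndrome k (set_char x) b (+) syndrome k (pattern (2 ^ k) j) b.
Proof.
by rewrite -syndrome_addb; apply: eq_syndrome => t tk; rewrite !set_char_lt in_Cv.
Qed.

Lemma partition_Cv k (v : {set 'I_(2 ^ k)}) :
  exists! x : {set 'I_(2 ^ k)}, in_span (Cset k (2 ^ k)) x /\ v \in cyc_verts (Cv x) (2 * 2 ^ k).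
Proof.
have [j jk vj] := syndrome_pattern_onto k (set_char v).
pose x := [set t : 'I_(2 ^ k) | (t \in v) (+) pattern (2 ^ k) j t].
have vE : v = Cv x j by apply/setP => t; rewrite in_Cv inE addbK.
exists x; split.
  split; last by apply/mapP; exists j; rewrite ?mem_iota.
  apply: syndrome_eq0_span => b bk; move: (vj b bk); rewrite {1}vE syndrome_Cv.
  by case: (syndrome k (set_char x) b); case: (syndrome k (pattern _ j) b).
move=> y [y_span /mapP [i]]; rewrite mem_iota /= => ik vi.
have ij : i = j.
  apply: (@syndrome_pattern_inj k) => // b bk.
  by rewrite -vj // vi syndrome_Cv syndrome_span.
by apply/setP => t; rewrite inE vi in_Cv ij addbK.
Qed.

Theorem mainTheorem5 (k n : nat) (hk : 1 <= k) (hn : n = 2 ^ k) :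
  (forall x : {set 'I_n}, in_span (Cset k n) x ->
     [/\ is_cycle_of_length (Cv x) (2 * n),
         isometric_cycle (Cv x) (2 * n)
       & has_flip_seq (Cv x) (iota 1 n ++ iota 1 n)]) /\
  (forall v : {set 'I_n},
     exists! x : {set 'I_n}, in_span (Cset k n) x /\ v \in cyc_verts (Cv x) (2 * n)).
Proof.
have n1 : 1 < n by rewrite hn -(expn0 2) ltn_exp2l.
split=> [x _ | v]; last by subst n; apply: partition_Cv.
rewrite mul2n -addnn; split; [exact: is_cycle_of_length_Cv | | exact: has_flip_seq_Cv].
by apply: isometric_cycle_Cv; lia.
Qed.
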